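(* Algorithm $\mathsf{NG}$ (described in the context) does not satisfy the common core property. That is, it is not the case that for every finite set of processes $\mathcal{P}$, every asymmetric fail-prone system $\mathbb{F}$ on $\mathcal{P}$, every asymmetric Byzantine quorum system $\mathbb{Q}$ for $\mathbb{F}$, and every execution of $\mathsf{NG}$ with a guild, there exists a set $S^+$ consisting of the values ag-proposed by the members of some quorum $Q_i\in\mathcal{Q}_i$ of some process $p_i$ in the maximal guild, such that $S^+\subseteq U$ for every set $U$ ag-delivered by a process of the maximal guild.
   Context: System model: a finite set $\mathcal{P}=\{p_1,\dots,p_n\}$ of processes communicating asynchronously over authenticated point-to-point links; every message sent from a correct process to a correct process is eventually delivered. A process that follows its protocol is correct; others (faulty, Byzantine) may behave arbitrarily. $F\subseteq\mathcal{P}$ denotes the (unknown) set of faulty processes of an execution. For $\mathcal{A}\subseteq 2^{\mathcal{P}}$, write $\mathcal{A}^*=\{A' : A'\subseteq A,\ A\in\mathcal{A}\}$. An asymmetric fail-prone system is an array $\mathbb{F}=[\mathcal{F}_1,\dots,\mathcal{F}_n]$ with $\mathcal{F}_i\subseteq 2^{\mathcal{P}}$. An asymmetric Byzantine quorum system for $\mathbb{F}$ is an array $\mathbb{Q}=[\mathcal{Q}_1,\dots,\mathcal{Q}_n]$ with $\mathcal{Q}_i\subseteq 2^{\mathcal{P}}$ (elements of $\mathcal{Q}_i$ are called quorums for $p_i$) satisfying: (consistency) for all $i,j$, all $Q_i\in\mathcal{Q}_i$, $Q_j\in\mathcal{Q}_j$ and all $F_{ij}\in\mathcal{F}_i^*\cap\mathcal{F}_j^*$,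 $Q_i\cap Q_j\not\subseteq F_{ij}$; (availability) for all $i$ and all $F_i\in\mathcal{F}_i$ there is $Q_i\in\mathcal{Q}_i$ with $F_i\cap Q_i=\emptyset$. A correct process $p_i$ is wise if $F\in\mathcal{F}_i^*$ and naive otherwise. A guild is a set $\mathcal{G}$ of wise processes such that every $p_i\in\mathcal{G}$ has some $Q_i\in\mathcal{Q}_i$ with $Q_i\subseteq\mathcal{G}$. An execution with a guild is one in which a nonempty guild exists; the maximal guild is the union of all guilds. Asymmetric reliable broadcast (interface arb-broadcast / arb-deliver) is a primitive which, in every execution with a guild, guarantees: if a correct process arb-broadcasts $m$, every process of the maximal guild eventually arb-delivers $m$; for each sender, all processes of the maximal guild that arb-deliver a message from it arb-deliver the same message; if some process of the maximal guild arb-delivers a message from a sender, every process of the maximal guild eventually arb-delivers a message from that sender; a correct process arb-delivers at most one message per sender, and if the sender is correct, only a message it arb-broadcast. Algorithm $\mathsf{NG}$ (code of process $p_i$; each correct process invokes ag-propose$(x_i)$ exactly once; each guarded action ''upon there being ...'' is executed at most once). State: sets $S_i,T_i,U_i$, initially empty. (1) Upon ag-propose$(x_i)$: arb-broadcast $(p_i,x_i)$. (2) Upon arb-delivering $(p_j,x_j)$ from $p_j$: $S_i\gets S_i\cup\{(p_j,x_j)\}$. (3) Upon there being $Q\in\mathcal{Q}_i$ such that $p_i$ has arb-delivered from every member of $Q$: send $\langle\mathrm{DistributeS},p_i,S_i\rangle$ to all processes. (4) Upon receiving $\langle\mathrm{DistributeS},p_j,S_j\rangle$: $T_i\gets T_i\cup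 S_j$. (5) Upon there being $Q\in\mathcal{Q}_i$ such that a DistributeS message was received from every member of $Q$: send $\langle\mathrm{DistributeT},p_i,T_i\rangle$ to all processes. (6) Upon receiving $\langle\mathrm{DistributeT},p_j,T_j\rangle$ from $p_j$: $U_i\gets U_i\cup T_j$. (7) Upon there being $Q\in\mathcal{Q}_i$ such that a DistributeT message was received from every member of $Q$: ag-deliver$(U_i)$. Common core property (of a protocol with interface ag-propose/ag-deliver): in any execution with a guild, there exists a set $S^+$ composed of the values ag-proposed by the processes of some quorum $Q_i\in\mathcal{Q}_i$ of some process $p_i$ in the maximal guild, such that every process of the maximal guild that ag-delivers a set $U$ has $S^+\subseteq U$. *)

(* Model of executions of Algorithm NG on top of an abstract
   asymmetric reliable broadcast (arb) satisfying its specification. *)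
From mathcomp Require Import all_boot.
Set Implicit Arguments. Unset Strict Implicit. Unset Printing Implicit Defensive.

Section NGModel.
Variables (n : nat) (V : finType).
Local Notation P := 'I_n.

Definition in_star (A : {set {set P}}) (X : {set P}) : Prop :=
  exists2 A0, A0 \in A & X \subset A0.

Definition asym_quorum_system (Fs Qs : P -> {set {set P}}) : Prop :=
  (forall i j Qi Qj Fij, Qi \in Qs i -> Qj \in Qs j ->
     in_star (Fs i) Fij -> in_star (Fs j) Fij -> ~ (Qi :&: Qj \subset Fij))
  /\ (forall i Fi, Fi \in Fs i -> exists2 Qi, Qi \in Qs i & [disjoint Fi & Qi]).

(* Input events at a process: arb-delivery of value v from sender j
   (the arb-broadcast payload (p_j, x_j) is represented by sender j and x_j),
   receipt of a DistributeS / DistributeT message (with its set) from sender j. *)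
Inductive event :=
| EDeliver of P & V
| ERecvS of P & {set P * V}
| ERecvT of P & {set P * V}.

(* F = faulty set, prop = proposals of correct processes, pt = time of
   ag-propose, trace i t = the (at most one) input event of process i at
   global time t. *)
Record execution := Exec {
  ex_F : {set P};
  ex_prop : P -> V;
  ex_pt : P -> nat;
  ex_trace : P -> nat -> option event }.

Variables (Fs Qs : P -> {set {set P}}) (E : execution).
Local Notation F := (ex_F E).
Local Notation tr := (ex_trace E).

Definition correct (i : P) : Prop := i \notin F.
Definition wise (i : P) : Prop := correct i /\ in_star (Fs i) F.
Definition guild (G : {set P}) : Prop :=
  (forall i, i \in G -> wise i) /\
  (forall i, i \in G -> exists2 Q, Q \in Qs i & Q \subset G).
Definition has_guild : Prop := exists G, guild G /\ G != set0.
Definition in_maxguild (i : P) : Prop := exists G, guild G /\ i \in G.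

(* local state of process i after the event at time t *)
Definition arb_delivered_by (i : P) (t : nat) (j : P) : Prop :=
  exists t' v, t' <= t /\ tr i t' = Some (EDeliver j v).
Definition Sst (i : P) (t : nat) (p : P * V) : Prop :=
  exists t', t' <= t /\ tr i t' = Some (EDeliver p.1 p.2).
Definition recvS_by (i : P) (t : nat) (j : P) : Prop :=
  exists t' X, t' <= t /\ tr i t' = Some (ERecvS j X).
Definition Tst (i : P) (t : nat) (p : P * V) : Prop :=
  exists t' j X, t' <= t /\ tr i t' = Some (ERecvS j X) /\ p \in X.
Definition recvT_by (i : P) (t : nat) (j : P) : Prop :=
  exists t' X, t' <= t /\ tr i t' = Some (ERecvT j X).
Definition Ust (i : P) (t : nat) (p : P * V) : Prop :=
  exists t' j X, t' <= t /\ tr i t' = Some (ERecvT j X) /\ p \in X.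

Definition guard3 i t : Prop :=
  exists2 Q, Q \in Qs i & forall j, j \in Q -> arb_delivered_by i t j.
Definition guard5 i t : Prop :=
  exists2 Q, Q \in Qs i & forall j, j \in Q -> recvS_by i t j.
Definition guard7 i t : Prop :=
  exists2 Q, Q \in Qs i & forall j, j \in Q -> recvT_by i t j.
(* a guarded action is executed (once) at the first time its guard holds *)
Definition first_time (g : nat -> Prop) (t : nat) : Prop :=
  g t /\ forall t', t' < t -> ~ g t'.

Definition ag_delivers (i : P) (U : {set P * V}) : Prop :=
  exists t, first_time (guard7 i) t /\ forall p, p \in U <-> Ust i t p.

Definition arb_spec : Prop :=
  (forall i j t1 t2 v1 v2, correct i ->
     tr i t1 = Some (EDeliver j v1) -> tr i t2 = Some (EDeliver j v2) -> t1 = t2)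
  (* integrity: from a correct sender, only the message it arb-broadcast,
     after it was broadcast (at its ag-propose) *)
  /\ (forall i j t v, correct i -> correct j ->
     tr i t = Some (EDeliver j v) -> v = ex_prop E j /\ ex_pt E j < t)
  /\ (has_guild ->
      (forall i j, in_maxguild i -> correct j ->
         exists t, tr i t = Some (EDeliver j (ex_prop E j)))
      /\ (forall i k j t1 t2 v1 v2, in_maxguild i -> in_maxguild k ->
         tr i t1 = Some (EDeliver j v1) -> tr k t2 = Some (EDeliver j v2) -> v1 = v2)
      /\ (forall i k j t1 v1, in_maxguild i -> in_maxguild k ->
         tr i t1 = Some (EDeliver j v1) -> exists t2 v2, tr k t2 = Some (EDeliver j v2))).

(* authenticated reliable links between correct processes: each correct process
   sends its DistributeS (resp. DistributeT) message, with content S_j (resp. T_j)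
   at the sending time, to everybody exactly once; it is received exactly once,
   strictly later; nothing else is received from a correct sender.  Messages
   from faulty senders are arbitrary. *)
Definition links_ok : Prop :=
  forall i j, correct i -> correct j ->
  (forall t X, tr i t = Some (ERecvS j X) ->
     exists ts, first_time (guard3 j) ts /\ ts < t /\ forall p, p \in X <-> Sst j ts p)
  /\ (forall ts, first_time (guard3 j) ts -> exists t X, ts < t /\ tr i t = Some (ERecvS j X))
  /\ (forall t1 t2 X1 X2, tr i t1 = Some (ERecvS j X1) -> tr i t2 = Some (ERecvS j X2) -> t1 = t2)
  /\ (forall t X, tr i t = Some (ERecvT j X) ->
     exists ts, first_time (guard5 j) ts /\ ts < t /\ forall p, p \in X <-> Tst j ts p)
  /\ (forall ts, first_time (guard5 j) ts -> exists t X, ts < t /\ tr i t = Some (ERecvT j X))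
  /\ (forall t1 t2 X1 X2, tr i t1 = Some (ERecvT j X1) -> tr i t2 = Some (ERecvT j X2) -> t1 = t2).

(* E is an execution of NG (time 0 is the initial state: no input event) *)
Definition NG_execution : Prop :=
  (forall i, correct i -> tr i 0 = None) /\ arb_spec /\ links_ok.

Definition common_core : Prop :=
  exists i, in_maxguild i /\ exists2 Q, Q \in Qs i &
    exists S : {set P * V},
      (forall p, p \in S -> p.1 \in Q /\ (correct p.1 -> p.2 = ex_prop E p.1)) /\
      (forall j, j \in Q -> exists v, (j, v) \in S) /\
      (forall k U, in_maxguild k -> ag_delivers k U -> S \subset U).

End NGModel.

(** Three correct processes.  p2 has no fail-prone set, hence is naive, and its only
    quorum is empty, so it sends empty DistributeS and DistributeT messages at once.
    The quorums of p0 are {p0,p1} and {p0,p2}, those of p1 are {p0,p1} and {p1,p2},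
    and {p0,p1} is the maximal guild.  p0 arb-delivers from p0 and p2 and receives
    their DistributeS and DistributeT messages before anything from p1 arrives, so it
    ag-delivers {(p0,x0), (p2,x2)}; symmetrically p1 ag-delivers {(p1,x1), (p2,x2)}.
    Every quorum of p0 contains p0, which is missing from the output of p1, and every
    quorum of p1 contains p1, which is missing from the output of p0, so the values of
    no quorum are contained in both outputs. *)

From mathcomp Require Import all_boot.

Set Implicit Arguments.
Unset Strict Implicit.
Unset Printing Implicit Defensive.

Lemma setI_neq0_card (T : finType) (A B : {set T}) :
  #|T| < #|A| + #|B| -> A :&: B != set0.
Proof.
move=> lt_T; apply: contraTneq lt_T => AB0.
by rewrite -cardsUI AB0 cards0 addn0 -leqNgt max_card.
Qed.

Lemma nth_pred_size (T : Type) (x0 : T) (a : pred T) s t :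
  ~~ a x0 -> a (nth x0 s t) -> t < size s.
Proof. by move=> a_x0; rewrite ltnNge; apply: contraTN => /(nth_default x0) ->. Qed.

Lemma has_take_nthP (T : Type) (x0 : T) (a : pred T) :
  ~~ a x0 -> forall s t, reflect (exists2 t', t' <= t & a (nth x0 s t')) (has a (take t.+1 s)).
Proof.
move=> a_x0 s t; apply: (iffP (has_nthP x0)) => [[t' lt_t' at']|[t' le_t' at']].
  rewrite size_take_min ltn_min in lt_t'; case/andP: lt_t' => lt_t' _.
  by exists t'; rewrite // nth_take in at'.
have lt_t' := nth_pred_size a_x0 at'.
by exists t'; rewrite ?nth_take ?size_take_min ?ltn_min ?ltnS ?le_t' ?lt_t'.
Qed.

Lemma count_le1_nth_inj (T : Type) (x0 : T) (a : pred T) (s : seq T) t1 t2 :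
  ~~ a x0 -> count a s <= 1 -> a (nth x0 s t1) -> a (nth x0 s t2) -> t1 = t2.
Proof.
move=> a_x0 count_le1; wlog lt12 : t1 t2 / t1 < t2.
  by move=> wlog a1 a2; case: (ltngtP t1 t2) => [lt|lt|//]; [exact: wlog | apply/esym/wlog].
move=> a1 a2; suff: 1 < count a s by rewrite ltnNge count_le1.
case: t2 lt12 a2 => // t2 lt12 a2.
rewrite -(cat_take_drop t2.+1 s) count_cat -add1n leq_add // -has_count.
  by apply/(has_take_nthP a_x0); exists t1.
apply/(has_nthP x0); exists 0; rewrite ?nth_drop ?addn0 //.
by rewrite size_drop subn_gt0 (nth_pred_size a_x0 a2).
Qed.

Lemma first_time_uniq (g : nat -> Prop) t1 t2 :
  first_time g t1 -> first_time g t2 -> t1 = t2.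
Proof.
move=> [g1 min1] [g2 min2]; case: (ltngtP t1 t2) => // [lt12|lt21].
- by case: (min2 _ lt12).
- by case: (min1 _ lt21).
Qed.

Lemma first_time_quorum (T : finType) (Qi : {set {set T}}) (h : nat -> T -> Prop) t :
    (forall j t1 t2, t1 <= t2 -> h t1 j -> h t2 j) ->
    (exists2 Q, Q \in Qi & forall j, j \in Q -> h t.+1 j) ->
    (forall Q, Q \in Qi -> exists2 j, j \in Q & ~ h t j) ->
  first_time (fun t => exists2 Q, Q \in Qi & forall j, j \in Q -> h t j) t.+1.
Proof.
move=> h_mono complete incomplete; split=> // t' lt_t' [Q /incomplete[j jQ not_h] /(_ j jQ)].
have le_t't : t' <= t by rewrite -ltnS.
by move/(h_mono j _ _ le_t't).
Qed.

Lemma first_time_empty_quorum (T : finType) (Qi : {set {set T}}) (h : nat -> T -> Prop) :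
  set0 \in Qi -> first_time (fun t => exists2 Q, Q \in Qi & forall j, j \in Q -> h t j) 0.
Proof. by split=> //; exists set0 => // j; rewrite inE. Qed.

Section Executions.
Variables (n : nat) (V : finType) (Fs Qs : 'I_n -> {set {set 'I_n}}) (E : execution n V).

Lemma arb_delivered_by_mono i j t1 t2 :
  t1 <= t2 -> arb_delivered_by E i t1 j -> arb_delivered_by E i t2 j.
Proof. by move=> le12 [t [v [le_t ev]]]; exists t, v; rewrite (leq_trans le_t). Qed.

Lemma recvS_by_mono i j t1 t2 : t1 <= t2 -> recvS_by E i t1 j -> recvS_by E i t2 j.
Proof. by move=> le12 [t [X [le_t ev]]]; exists t, X; rewrite (leq_trans le_t). Qed.

Lemma recvT_by_mono i j t1 t2 : t1 <= t2 -> recvT_by E i t1 j -> recvT_by E i t2 j.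
Proof. by move=> le12 [t [X [le_t ev]]]; exists t, X; rewrite (leq_trans le_t). Qed.

Lemma not_common_core :
    (forall i Q, in_maxguild Fs Qs E i -> Q \in Qs i -> exists2 j, j \in Q &
       exists k U, [/\ in_maxguild Fs Qs E k, ag_delivers Qs E k U & forall v, (j, v) \notin U]) ->
  ~ common_core Fs Qs E.
Proof.
move=> missed [i [i_mg [Q QQi [S [_ [S_covers S_core]]]]]].
have [j jQ [k [U [k_mg k_U j_notin_U]]]] := missed i Q i_mg QQi.
have [v jv_S] := S_covers j jQ.
by move: (subsetP (S_core k U k_mg k_U) _ jv_S); rewrite (negbTE (j_notin_U v)).
Qed.

End Executions.

Section ListTraces.
Variables (n : nat) (V : finType) (E : execution n V).
Variable s : 'I_n -> seq (option (event n V)).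
Hypothesis trace_s : forall i t, ex_trace E i t = nth None (s i) t.

Definition delivered_from (j : 'I_n) (e : option (event n V)) :=
  if e is Some (EDeliver k _) then k == j else false.
Definition delivered (p : 'I_n * V) (e : option (event n V)) :=
  if e is Some (EDeliver k v) then p == (k, v) else false.
Definition recvS_from (j : 'I_n) (e : option (event n V)) :=
  if e is Some (ERecvS k _) then k == j else false.
Definition in_recvS (p : 'I_n * V) (e : option (event n V)) :=
  if e is Some (ERecvS _ X) then p \in X else false.
Definition recvT_from (j : 'I_n) (e : option (event n V)) :=
  if e is Some (ERecvT k _) then k == j else false.
Definition in_recvT (p : 'I_n * V) (e : option (event n V)) :=
  if e is Some (ERecvT _ X) then p \in X else false.

Lemma occurs_byP (a : pred (option (event n V))) : ~~ a None -> forall i t,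
  reflect (exists2 t', t' <= t & a (ex_trace E i t')) (has a (take t.+1 (s i))).
Proof.
move=> a_None i t; apply: (iffP (has_take_nthP a_None _ _)) => -[t' le_t' at'].
  by exists t'; rewrite ?trace_s.
by exists t'; rewrite -?trace_s.
Qed.

Lemma arb_delivered_byP i t j :
  reflect (arb_delivered_by E i t j) (has (delivered_from j) (take t.+1 (s i))).
Proof.
apply: (iffP (occurs_byP _ _ _)) => // [[t' le_t']|[t' [v [le_t' ev]]]].
  by case ev: ex_trace => [[k v||]|] //= /eqP k_j; exists t', v; rewrite -k_j.
by exists t'; rewrite // ev /=.
Qed.

Lemma SstP i t p : reflect (Sst E i t p) (has (delivered p) (take t.+1 (s i))).
Proof.
apply: (iffP (occurs_byP _ _ _)) => // [[t' le_t']|[t' [le_t' ev]]].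
  by case ev: ex_trace => [[k v||]|] //= /eqP->; exists t'.
by exists t'; rewrite // ev /= -surjective_pairing.
Qed.

Lemma recvS_byP i t j :
  reflect (recvS_by E i t j) (has (recvS_from j) (take t.+1 (s i))).
Proof.
apply: (iffP (occurs_byP _ _ _)) => // [[t' le_t']|[t' [X [le_t' ev]]]].
  by case ev: ex_trace => [[|k X|]|] //= /eqP k_j; exists t', X; rewrite -k_j.
by exists t'; rewrite // ev /=.
Qed.

Lemma TstP i t p : reflect (Tst E i t p) (has (in_recvS p) (take t.+1 (s i))).
Proof.
apply: (iffP (occurs_byP _ _ _)) => // [[t' le_t']|[t' [j [X [le_t' [ev pX]]]]]].
  by case ev: ex_trace => [[|j X|]|] //= pX; exists t', j, X.
by exists t'; rewrite // ev.
Qed.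

Lemma recvT_byP i t j :
  reflect (recvT_by E i t j) (has (recvT_from j) (take t.+1 (s i))).
Proof.
apply: (iffP (occurs_byP _ _ _)) => // [[t' le_t']|[t' [X [le_t' ev]]]].
  by case ev: ex_trace => [[||k X]|] //= /eqP k_j; exists t', X; rewrite -k_j.
by exists t'; rewrite // ev /=.
Qed.

Lemma UstP i t p : reflect (Ust E i t p) (has (in_recvT p) (take t.+1 (s i))).
Proof.
apply: (iffP (occurs_byP _ _ _)) => // [[t' le_t']|[t' [j [X [le_t' [ev pX]]]]]].
  by case ev: ex_trace => [[||j X]|] //= pX; exists t', j, X.
by exists t'; rewrite // ev.
Qed.

End ListTraces.

Section Counterexample.

Local Notation p0 := (@Ordinal 3 0 isT).
Local Notation p1 := (@Ordinal 3 1 isT).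
Local Notation p2 := (@Ordinal 3 2 isT).

Lemma ord3_ind (P : 'I_3 -> Prop) : P p0 -> P p1 -> P p2 -> forall i, P i.
Proof.
by move=> P0 P1 P2 [[|[|[|//]]] lt_i3]; rewrite (bool_irrelevance lt_i3 isT).
Qed.

(* The set S_j = T_j that p_j sends in both its DistributeS and DistributeT messages. *)
Definition distributed (j : 'I_3) : {set 'I_3 * unit} :=
  match val j with
  | 0 => [set (p0, tt); (p2, tt)]
  | 1 => [set (p1, tt); (p2, tt)]
  | _ => set0
  end.

Local Notation deliver j := (Some (EDeliver j tt)).
Local Notation recvS j := (Some (ERecvS j (distributed j))).
Local Notation recvT j := (Some (ERecvT j (distributed j))).

Definition trace (i : 'I_3) : seq (option (event 3 unit)) :=
  match val i with
  | 0 => [:: None; deliver p0; deliver p2; recvS p2; recvS p0; recvT p2; recvT p0;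
             deliver p1; recvS p1; recvT p1]
  | 1 => [:: None; deliver p1; deliver p2; recvS p2; recvS p1; recvT p2; recvT p1;
             deliver p0; recvS p0; recvT p0]
  | _ => [:: None; recvS p2; recvT p2; recvS p0; recvS p1; recvT p0; recvT p1]
  end.

Definition ex : execution 3 unit :=
  Exec set0 (fun=> tt) (fun=> 0) (fun i => nth None (trace i)).

Let ex_traceE : forall i t, ex_trace ex i t = nth None (trace i) t := fun _ _ => erefl.

Definition Fs_ex (i : 'I_3) : {set {set 'I_3}} := if val i == 2 then set0 else [set set0].

Definition Qs_ex (i : 'I_3) : {set {set 'I_3}} :=
  match val i with
  | 0 => [set [set p0; p1]; [set p0; p2]]
  | 1 => [set [set p0; p1]; [set p1; p2]]
  | _ => [set set0]
  end.

Lemma in_star_Fs_ex i X : in_star (Fs_ex i) X -> X = set0 /\ val i != 2.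
Proof.
rewrite /Fs_ex; case: ifP => [_ [?]|i_ne2 [Y]]; rewrite inE // => /eqP->.
by rewrite subset0 => /eqP.
Qed.

Lemma card_Qs_ex i Q : val i != 2 -> Q \in Qs_ex i -> #|Q| = 2.
Proof.
by move: i; apply: ord3_ind => //= _; rewrite !inE => /orP[]/eqP->; rewrite cards2.
Qed.

Lemma quorum_system_ex : asym_quorum_system Fs_ex Qs_ex.
Proof.
split=> [i j Qi Qj F QiQ QjQ /in_star_Fs_ex[-> i_ne2] /in_star_Fs_ex[_ j_ne2]|i F].
  rewrite subset0; apply/negP/setI_neq0_card.
  by rewrite (card_Qs_ex i_ne2 QiQ) (card_Qs_ex j_ne2 QjQ) card_ord.
rewrite /Fs_ex; case: ifP => [_|i_ne2]; rewrite inE // => /eqP->.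
exists [set p0; p1]; last by rewrite disjoints_subset sub0set.
by move: i i_ne2; apply: ord3_ind; rewrite /Qs_ex //= !inE eqxx.
Qed.

Lemma guild_ex : guild Fs_ex Qs_ex ex [set p0; p1].
Proof.
split=> i; rewrite !inE => /orP[]/eqP->.
- by split; [rewrite /correct inE | exists set0; rewrite /Fs_ex ?inE].
- by split; [rewrite /correct inE | exists set0; rewrite /Fs_ex ?inE].
- by exists [set p0; p1]; rewrite /Qs_ex ?inE ?eqxx.
- by exists [set p0; p1]; rewrite /Qs_ex ?inE ?eqxx.
Qed.

Lemma has_guild_ex : has_guild Fs_ex Qs_ex ex.
Proof.
exists [set p0; p1]; split; first exact: guild_ex.
by apply/set0Pn; exists p0; rewrite !inE eqxx.
Qed.

Lemma in_maxguild_ex i : in_maxguild Fs_ex Qs_ex ex i <-> val i != 2.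
Proof.
split=> [[G [[G_wise _] iG]]|]; first by have [_ /in_star_Fs_ex[]] := G_wise i iG.
move=> i_ne2; exists [set p0; p1]; split; first exact: guild_ex.
by move: i i_ne2; apply: ord3_ind; rewrite !inE ?eqxx ?orbT.
Qed.

Definition sendS_time (j : 'I_3) := if val j == 2 then 0 else 2.
Definition sendT_time (j : 'I_3) := if val j == 2 then 0 else 4.

Definition deliver_time (j : 'I_3) := if val j == 2 then 0 else 6.

(* Backtracks over the complete quorum and over the member each quorum misses one
   step earlier. *)
Ltac solve_quorum_first_time mono view :=
  apply: first_time_quorum; first exact: mono;
  [ (exists [set p0; p2] + exists [set p1; p2]);
      [by rewrite !inE eqxx orbT | by move=> j; rewrite !inE => /orP[]/eqP->; apply/view]
  | by move=> Q; rewrite !inE => /orP[]/eqP->; (exists p0 + exists p1 + exists p2);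
      rewrite ?inE ?eqxx ?orbT // => /view ].

Lemma first_time_guard3_ex j : first_time (guard3 Qs_ex ex j) (sendS_time j).
Proof.
move: j; apply: ord3_ind; rewrite /sendS_time /=;
  last by apply: first_time_empty_quorum; rewrite inE.
all: solve_quorum_first_time arb_delivered_by_mono (arb_delivered_byP ex_traceE).
Qed.

Lemma first_time_guard5_ex j : first_time (guard5 Qs_ex ex j) (sendT_time j).
Proof.
move: j; apply: ord3_ind; rewrite /sendT_time /=;
  last by apply: first_time_empty_quorum; rewrite inE.
all: solve_quorum_first_time recvS_by_mono (recvS_byP ex_traceE).
Qed.

Lemma first_time_guard7_ex j : first_time (guard7 Qs_ex ex j) (deliver_time j).
Proof.
move: j; apply: ord3_ind; rewrite /deliver_time /=;
  last by apply: first_time_empty_quorum; rewrite inE.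
all: solve_quorum_first_time recvT_by_mono (recvT_byP ex_traceE).
Qed.

Lemma distributed_Sst j p : p \in distributed j <-> Sst ex j (sendS_time j) p.
Proof.
suff ->: (p \in distributed j) = has (delivered p) (take (sendS_time j).+1 (trace j)).
  exact: iff_sym (rwP (SstP ex_traceE _ _ _)).
by move: j; apply: ord3_ind; rewrite /= !inE ?orbF.
Qed.

Lemma distributed_Tst j p : p \in distributed j <-> Tst ex j (sendT_time j) p.
Proof.
suff ->: (p \in distributed j) = has (in_recvS p) (take (sendT_time j).+1 (trace j)).
  exact: iff_sym (rwP (TstP ex_traceE _ _ _)).
by move: j; apply: ord3_ind; rewrite /= !inE ?orbF.
Qed.

Lemma distributed_Ust j p : p \in distributed j <-> Ust ex j (deliver_time j) p.
Proof.
suff ->: (p \in distributed j) = has (in_recvT p) (take (deliver_time j).+1 (trace j)).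
  exact: iff_sym (rwP (UstP ex_traceE _ _ _)).
by move: j; apply: ord3_ind; rewrite /= !inE ?orbF.
Qed.

Lemma recvS_ex_sent i t j X :
  ex_trace ex i t = Some (ERecvS j X) -> sendS_time j < t /\ X = distributed j.
Proof.
move: i; apply: ord3_ind; do 10?[case: t => [|t]]; rewrite /= ?nth_nil => ev;
  first [discriminate | by case: ev => <- <-].
Qed.

Lemma recvT_ex_sent i t j X :
  ex_trace ex i t = Some (ERecvT j X) -> sendT_time j < t /\ X = distributed j.
Proof.
move: i; apply: ord3_ind; do 10?[case: t => [|t]]; rewrite /= ?nth_nil => ev;
  first [discriminate | by case: ev => <- <-].
Qed.

Lemma ex_trace0 i : ex_trace ex i 0 = None.
Proof. by move: i; apply: ord3_ind. Qed.

Lemma ex_trace_once (a : pred (option (event 3 unit))) i t1 t2 :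
    ~~ a None -> count a (trace i) <= 1 ->
  a (ex_trace ex i t1) -> a (ex_trace ex i t2) -> t1 = t2.
Proof. exact: count_le1_nth_inj. Qed.

Lemma arb_delivers_ex i j :
  val i != 2 -> exists t, ex_trace ex i t = Some (EDeliver j tt).
Proof.
move=> i_ne2.
have /(arb_delivered_byP ex_traceE)[t [[] [_ ev]]] : has (delivered_from j) (take 10 (trace i)).
  by move: i j i_ne2; do 2!apply: ord3_ind.
by exists t.
Qed.

Lemma arb_spec_ex : arb_spec Fs_ex Qs_ex ex.
Proof.
split; [|split].
- move=> i j t1 t2 v1 v2 _ ev1 ev2; apply: (ex_trace_once (a := delivered_from j) (i := i));
  rewrite ?ev1 ?ev2 //=; by move: i j {ev1 ev2}; do 2!apply: ord3_ind.
- by move=> i j [|t] [] _ _; rewrite ?ex_trace0.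
- move=> _; split; [|split].
  + by move=> i j /in_maxguild_ex i_ne2 _; exact: arb_delivers_ex.
  + by move=> i k j t1 t2 [] [].
  + move=> i k j t1 v1 _ /in_maxguild_ex k_ne2 _.
    by have [t ev] := arb_delivers_ex j k_ne2; exists t, tt.
Qed.

Lemma links_ok_ex : links_ok Qs_ex ex.
Proof.
move=> i j _ _; split; [|split; [|split; [|split; [|split]]]].
- move=> t X /recvS_ex_sent[late ->]; exists (sendS_time j).
  split; first exact: first_time_guard3_ex.
  by split=> // p; exact: distributed_Sst.
- move=> ts /first_time_uniq/(_ (first_time_guard3_ex j)) ->.
  have /(recvS_byP ex_traceE)[t [X [_ ev]]] : has (recvS_from j) (take 10 (trace i)).
    by move: i j; do 2!apply: ord3_ind.
  by exists t, X; have [] := recvS_ex_sent ev.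
- move=> t1 t2 X1 X2 ev1 ev2; apply: (ex_trace_once (a := recvS_from j) (i := i));
  rewrite ?ev1 ?ev2 //=; by move: i j {ev1 ev2}; do 2!apply: ord3_ind.
- move=> t X /recvT_ex_sent[late ->]; exists (sendT_time j).
  split; first exact: first_time_guard5_ex.
  by split=> // p; exact: distributed_Tst.
- move=> ts /first_time_uniq/(_ (first_time_guard5_ex j)) ->.
  have /(recvT_byP ex_traceE)[t [X [_ ev]]] : has (recvT_from j) (take 10 (trace i)).
    by move: i j; do 2!apply: ord3_ind.
  by exists t, X; have [] := recvT_ex_sent ev.
- move=> t1 t2 X1 X2 ev1 ev2; apply: (ex_trace_once (a := recvT_from j) (i := i));
  rewrite ?ev1 ?ev2 //=; by move: i j {ev1 ev2}; do 2!apply: ord3_ind.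
Qed.

Lemma NG_execution_ex : NG_execution Fs_ex Qs_ex ex.
Proof.
by split; [move=> i _; exact: ex_trace0 | split; [exact: arb_spec_ex | exact: links_ok_ex]].
Qed.

Lemma ag_delivers_ex i : ag_delivers Qs_ex ex i (distributed i).
Proof.
exists (deliver_time i); split; first exact: first_time_guard7_ex.
by move=> p; exact: distributed_Ust.
Qed.

Lemma not_common_core_ex : ~ common_core Fs_ex Qs_ex ex.
Proof.
apply: not_common_core => i Q /in_maxguild_ex i_ne2 QQi; exists i.
  by move: i i_ne2 QQi; apply: ord3_ind; rewrite //= !inE => _ /orP[]/eqP->; rewrite !inE eqxx.
move: i i_ne2 {QQi}; apply: ord3_ind => // _.
- exists p1, (distributed p1); split; [exact/in_maxguild_ex | exact: ag_delivers_ex |].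
  by case; rewrite !inE.
- exists p0, (distributed p0); split; [exact/in_maxguild_ex | exact: ag_delivers_ex |].
  by case; rewrite !inE.
Qed.

End Counterexample.

Theorem lemma3p2 :
  ~ (forall (n : nat) (V : finType) (Fs Qs : 'I_n -> {set {set 'I_n}})
        (E : execution n V),
       asym_quorum_system Fs Qs ->
       NG_execution Fs Qs E ->
       has_guild Fs Qs E ->
       common_core Fs Qs E).
Proof.
move=> common_core_holds; apply: not_common_core_ex.
exact: common_core_holds quorum_system_ex NG_execution_ex has_guild_ex.
Qed.
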